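(* For every $n\ge1$ and masses $m_i>0$, the $n$-body problem in ${\bf H}^2$ has no parabolic relative equilibria: there is no solution defined for all $t\in\mathbb R$ of the form $x_i=a_i-b_it+c_it$, $y_i=a_it+b_i(1-t^2/2)+c_it^2/2$, $z_i=a_it-b_it^2/2+c_i(1+t^2/2)$, $i=1,\dots,n$, with real constants $a_i,b_i,c_i$ satisfying $a_i^2+b_i^2-c_i^2=-1$.
   Context: The $n$-body problem in ${\bf H}^2$ (Weierstrass model): with the Lorentz inner product ${\bf a}\boxdot{\bf b}=a_xb_x+a_yb_y-a_zb_z$ on $\mathbb R^3$, ${\bf H}^2=\{(x,y,z): x^2+y^2-z^2=-1,\ z>0\}$. Bodies of masses $m_1,\dots,m_n>0$ have positions ${\bf q}_i=(x_i,y_i,z_i)\in{\bf H}^2$ and satisfy $$\ddot{\bf q}_i=\sum_{j\ne i}\frac{m_j[{\bf q}_j+({\bf q}_i\boxdot{\bf q}_j){\bf q}_i]}{[({\bf q}_i\boxdot{\bf q}_j)^2-1]^{3/2}}+(\dot{\bf q}_i\boxdot\dot{\bf q}_i){\bf q}_i,\qquad {\bf q}_i\boxdot{\bf q}_i=-1,\ \ {\bf q}_i\boxdot\dot{\bf q}_i=0,$$ $i=1,\dots,n$, defined only for collisionless configurations. The angular momentum $\sum_i m_i{\bf q}_i\boxtimes\dot{\bf q}_i$, where ${\bf a}\boxtimes{\bf b}=(a_yb_z-a_zb_y,\ a_zb_x-a_xb_z,\ a_yb_x-a_xb_y)$, is a first integral. *)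

From Stdlib Require Import Reals List Arith.
Open Scope R_scope.

Record V3 := mkV3 { vx : R; vy : R; vz : R }.

Definition vzero : V3 := mkV3 0 0 0.
Definition vadd (a b : V3) : V3 := mkV3 (vx a + vx b) (vy a + vy b) (vz a + vz b).
Definition vscal (k : R) (a : V3) : V3 := mkV3 (k * vx a) (k * vy a) (k * vz a).

Definition ldot (a b : V3) : R := vx a * vx b + vy a * vy b - vz a * vz b.

Definition vsum (f : nat -> V3) (l : list nat) : V3 :=
  fold_right (fun j acc => vadd (f j) acc) vzero l.

(* Right-hand side of the equations of motion for body i (bodies 0..n-1),
   given positions q and velocities v at time t. *)
Definition accel (n : nat) (m : nat -> R) (q v : nat -> R -> V3) (i : nat) (t : R) : V3 :=
  vadd
    (vsum (fun j =>
       if Nat.eqb j i then vzero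
       else vscal (m j / Rpower ((ldot (q i t) (q j t))^2 - 1) (3/2))
                  (vadd (q j t) (vscal (ldot (q i t) (q j t)) (q i t))))
       (seq 0 n))
    (vscal (ldot (v i t) (v i t)) (q i t)).

Definition has_deriv (f g : R -> V3) : Prop :=
  forall t : R,
    derivable_pt_lim (fun s => vx (f s)) t (vx (g t)) /\
    derivable_pt_lim (fun s => vy (f s)) t (vy (g t)) /\
    derivable_pt_lim (fun s => vz (f s)) t (vz (g t)).

(* q is a solution of the n-body problem in H^2, defined for all t in R:
   twice differentiable, positions in H^2 (q⊡q = -1, z > 0), velocities
   tangent (q⊡q' = 0), collisionless, and satisfying the equations. *)
Definition is_solution (n : nat) (m : nat -> R) (q : nat -> R -> V3) : Prop :=
  exists v acc : nat -> R -> V3,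
    forall i : nat, (i < n)%nat ->
      has_deriv (q i) (v i) /\ has_deriv (v i) (acc i) /\
      forall t : R,
        ldot (q i t) (q i t) = -1 /\ 0 < vz (q i t) /\
        ldot (q i t) (v i t) = 0 /\
        (forall j : nat, (j < n)%nat -> j <> i -> q i t <> q j t) /\
        acc i t = accel n m q v i t.

Definition parabolic (a b c : nat -> R) (i : nat) (t : R) : V3 :=
  mkV3 (a i - b i * t + c i * t)
       (a i * t + b i * (1 - t^2/2) + c i * t^2/2)
       (a i * t - b i * t^2/2 + c i * (1 + t^2/2)).

From Stdlib Require Import Reals List Arith Lra Lia FunctionalExtensionality.
Open Scope R_scope.

(* The x-component of the total angular momentum
   L = sum_i m_i q_i ⊠ q_i' has derivative sum_i m_i (q_i ⊠ q_i'')_x, the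
   total torque.  For any configuration the torque of the equations of motion
   vanishes: the term along q_i contributes nothing, and the pairwise
   gravitational terms are antisymmetric in (i, j), so their double sum
   cancels.  On the other hand, for the parabolic candidate the y- and
   z-accelerations of body i both equal c_i - b_i while y_i - z_i = b_i - c_i,
   so the torque of body i is -(c_i - b_i)^2, which is strictly negative
   because a_i^2 + b_i^2 - c_i^2 = -1 forbids c_i = b_i.  The total torque is
   therefore strictly negative, a contradiction. *)

Definition rsum (f : nat -> R) (l : list nat) : R :=
  fold_right (fun j acc => f j + acc) 0 l.

Lemma rsum_ext_in (f g : nat -> R) (l : list nat) :
  (forall j, In j l -> f j = g j) -> rsum f l = rsum g l.
Proof.
  induction l as [|x l IH]; intros H; simpl; [reflexivity|].
  rewrite (H x) by (left; reflexivity).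
  rewrite IH; [reflexivity|]. intros j Hj; apply H; right; exact Hj.
Qed.

Lemma rsum_zero (l : list nat) : rsum (fun _ => 0) l = 0.
Proof. induction l as [|x l IH]; simpl; [reflexivity | rewrite IH; ring]. Qed.

Lemma rsum_add (f g : nat -> R) (l : list nat) :
  rsum (fun j => f j + g j) l = rsum f l + rsum g l.
Proof. induction l as [|x l IH]; simpl; [ring | rewrite IH; ring]. Qed.

Lemma rsum_scal (k : R) (f : nat -> R) (l : list nat) :
  rsum (fun j => k * f j) l = k * rsum f l.
Proof. induction l as [|x l IH]; simpl; [ring | rewrite IH; ring]. Qed.

Lemma rsum_opp (f : nat -> R) (l : list nat) : rsum (fun j => - f j) l = - rsum f l.
Proof. induction l as [|x l IH]; simpl; [ring | rewrite IH; ring]. Qed.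

Lemma rsum_swap (G : nat -> nat -> R) (l1 l2 : list nat) :
  rsum (fun i => rsum (G i) l2) l1 = rsum (fun j => rsum (fun i => G i j) l1) l2.
Proof.
  induction l1 as [|x l1 IH]; simpl.
  - symmetry; apply rsum_zero.
  - rewrite IH, <- rsum_add. reflexivity.
Qed.

Lemma rsum_antisym_zero (G : nat -> nat -> R) (l : list nat) :
  (forall i j, G j i = - G i j) -> rsum (fun i => rsum (G i) l) l = 0.
Proof.
  intros HG.
  assert (Hopp : rsum (fun i => rsum (G i) l) l = - rsum (fun i => rsum (G i) l) l).
  { rewrite rsum_swap at 1. rewrite <- rsum_opp.
    apply rsum_ext_in; intros j _. rewrite <- rsum_opp.
    apply rsum_ext_in; intros i _. apply HG. }
  lra.
Qed.

Lemma rsum_pos (f : nat -> R) (l : list nat) :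
  l <> nil -> (forall j, In j l -> 0 < f j) -> 0 < rsum f l.
Proof.
  induction l as [|x l IH]; intros Hne Hpos; [congruence|]. simpl.
  assert (Hx : 0 < f x) by (apply Hpos; left; reflexivity).
  destruct l as [|y l']; simpl in *; [lra|].
  assert (0 < rsum f (y :: l')).
  { apply IH; [discriminate | intros j Hj; apply Hpos; right; exact Hj]. }
  simpl in *. lra.
Qed.

Definition cross_x (p w : V3) : R := vy p * vz w - vz p * vy w.

Lemma cross_x_antisym (p w : V3) : cross_x w p = - cross_x p w.
Proof. unfold cross_x; ring. Qed.

Lemma cross_x_vsum (p : V3) (f : nat -> V3) (l : list nat) :
  cross_x p (vsum f l) = rsum (fun j => cross_x p (f j)) l.
Proof.
  induction l as [|x l IH]; simpl; unfold cross_x in *; simpl; [ring|].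
  rewrite <- IH; ring.
Qed.

Lemma ldot_sym (p w : V3) : ldot w p = ldot p w.
Proof. unfold ldot; ring. Qed.

Definition pair_torque (m : nat -> R) (q : nat -> R -> V3) (t : R) (i j : nat) : R :=
  if Nat.eqb j i then 0
  else m i * (m j / Rpower ((ldot (q i t) (q j t))^2 - 1) (3/2)) * cross_x (q i t) (q j t).

(* The torque of body i under the equations of motion is the sum of the pair
   torques: the centripetal term along q_i and the q_i-parts of the
   gravitational terms are parallel to q_i and contribute nothing. *)
Lemma body_torque (n : nat) (m : nat -> R) (q v : nat -> R -> V3) (i : nat) (t : R) :
  m i * cross_x (q i t) (accel n m q v i t) = rsum (pair_torque m q t i) (seq 0 n).
Proof.
  unfold accel.
  set (F := fun j => if Nat.eqb j i then vzero
       else vscal (m j / Rpower ((ldot (q i t) (q j t))^2 - 1) (3/2))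
                  (vadd (q j t) (vscal (ldot (q i t) (q j t)) (q i t)))).
  assert (Hcentr : forall S k, cross_x (q i t) (vadd S (vscal k (q i t))) = cross_x (q i t) S).
  { intros S k; unfold cross_x; simpl; ring. }
  rewrite Hcentr, cross_x_vsum, <- rsum_scal.
  apply rsum_ext_in; intros j _. unfold F, pair_torque.
  destruct (Nat.eqb j i); unfold cross_x; simpl; ring.
Qed.

Lemma total_torque_zero (n : nat) (m : nat -> R) (q v : nat -> R -> V3) (t : R) :
  rsum (fun i => m i * cross_x (q i t) (accel n m q v i t)) (seq 0 n) = 0.
Proof.
  rewrite (rsum_ext_in _ (fun i => rsum (pair_torque m q t i) (seq 0 n)))
    by (intros i _; apply body_torque).
  apply rsum_antisym_zero. intros i j. unfold pair_torque.
  rewrite Nat.eqb_sym. destruct (Nat.eqb j i); [ring|].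
  rewrite ldot_sym, cross_x_antisym. unfold Rdiv; ring.
Qed.

Lemma derivative_of_quadratic (f g : R -> R) (p r u : R) :
  (forall s, f s = p + r * s + u * s ^ 2) ->
  (forall t, derivable_pt_lim f t (g t)) ->
  forall t, g t = r + 2 * u * t.
Proof.
  intros Hf Hg t.
  replace f with (fun s => p + r * s + u * s ^ 2) in Hg
    by (apply functional_extensionality; intro s; symmetry; apply Hf).
  apply (uniqueness_limite (fun s => p + r * s + u * s ^ 2) t); [exact (Hg t)|].
  assert (H := derivable_pt_lim_plus _ _ t _ _
     (derivable_pt_lim_plus _ _ t _ _ (derivable_pt_lim_const p t)
        (derivable_pt_lim_scal _ r t _ (derivable_pt_lim_id t)))
     (derivable_pt_lim_scal _ u t _ (derivable_pt_lim_pow t 2))).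
  unfold plus_fct, mult_real_fct, fct_cte, id in H. simpl in H.
  replace (r + 2 * u * t) with (0 + r * 1 + u * ((1 + 1) * (t * 1))) by ring.
  exact H.
Qed.

Lemma parabolic_accel_yz (a b c : nat -> R) (i : nat) (v acc : R -> V3) :
  has_deriv (parabolic a b c i) v -> has_deriv v acc ->
  forall t, vy (acc t) = c i - b i /\ vz (acc t) = c i - b i.
Proof.
  intros Dq Dv t.
  assert (Vy : forall s, vy (v s) = a i + 2 * ((c i - b i) / 2) * s).
  { apply (derivative_of_quadratic (fun s => vy (parabolic a b c i s)) _ (b i)).
    - intro s; unfold parabolic; simpl; field.
    - intro s; apply (Dq s). }
  assert (Vz : forall s, vz (v s) = a i + 2 * ((c i - b i) / 2) * s).
  { apply (derivative_of_quadratic (fun s => vz (parabolic a b c i s)) _ (c i)).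
    - intro s; unfold parabolic; simpl; field.
    - intro s; apply (Dq s). }
  split.
  - rewrite (derivative_of_quadratic (fun s => vy (v s)) (fun s => vy (acc s))
               (a i) (c i - b i) 0); [ring | intro s; rewrite Vy; field |].
    intro s; apply (Dv s).
  - rewrite (derivative_of_quadratic (fun s => vz (v s)) (fun s => vz (acc s))
               (a i) (c i - b i) 0); [ring | intro s; rewrite Vz; field |].
    intro s; apply (Dv s).
Qed.

Lemma parabolic_torque (a b c : nat -> R) (i : nat) (v acc : R -> V3) (t : R) :
  has_deriv (parabolic a b c i) v -> has_deriv v acc ->
  cross_x (parabolic a b c i t) (acc t) = - (c i - b i) ^ 2.
Proof.
  intros Dq Dv. destruct (parabolic_accel_yz a b c i v acc Dq Dv t) as [Ay Az].
  unfold cross_x. rewrite Ay, Az. unfold parabolic; simpl; field.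
Qed.

Lemma hyperboloid_gap_pos (a b c : R) : a ^ 2 + b ^ 2 - c ^ 2 = -1 -> 0 < (c - b) ^ 2.
Proof.
  intros Hh. rewrite <- Rsqr_pow2. apply Rsqr_pos_lt. intros Hcb.
  replace c with b in Hh by lra.
  assert (0 <= a ^ 2) by apply pow2_ge_0. lra.
Qed.

Theorem mainTheorem19 :
  forall (n : nat) (m : nat -> R),
    (1 <= n)%nat ->
    (forall i : nat, (i < n)%nat -> 0 < m i) ->
    ~ (exists a b c : nat -> R,
          (forall i : nat, (i < n)%nat -> a i ^ 2 + b i ^ 2 - c i ^ 2 = -1) /\
          is_solution n m (parabolic a b c)).
Proof.
  intros n m Hn Hm [a [b [c [Hhyp [v [acc Hsol]]]]]].
  assert (Htorque : forall i, In i (seq 0 n) ->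
    m i * cross_x (parabolic a b c i 0) (accel n m (parabolic a b c) v i 0)
    = - (m i * (c i - b i) ^ 2)).
  { intros i Hi. apply in_seq in Hi.
    destruct (Hsol i ltac:(lia)) as [Dq [Dv Ht]].
    destruct (Ht 0) as [_ [_ [_ [_ Eacc]]]].
    rewrite <- Eacc, (parabolic_torque a b c i (v i) (acc i) 0 Dq Dv). ring. }
  (* Each term m_i (c_i - b_i)^2 is strictly positive, so the total torque at
     time 0, which vanishes by [total_torque_zero], would be negative. *)
  assert (Hpos : 0 < rsum (fun i => m i * (c i - b i) ^ 2) (seq 0 n)).
  { apply rsum_pos.
    - destruct n; [lia | discriminate].
    - intros i Hi. apply in_seq in Hi.
      apply Rmult_lt_0_compat; [apply Hm; lia|].
      apply (hyperboloid_gap_pos (a i)), Hhyp; lia. }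
  pose proof (total_torque_zero n m (parabolic a b c) v 0) as Hzero.
  rewrite (rsum_ext_in _ _ _ Htorque), rsum_opp in Hzero.
  lra.
Qed.
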